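(* Let $m\ge2$ be an integer and let $g\in C^\infty(\mathbb{R})$ with $g(0)>0$. Let $\tilde g\in C^\infty(\mathbb{R})$ satisfy, for some $0<\delta<1$: $\tilde g(x)=g(x)$ for $|x|\le\delta$, $\tilde g(x)=\frac9{10}g(0)$ for $|x|\ge1$, and $0\le -x\tilde g'(x)<\frac15 g(0)$, $|x^2\tilde g''(x)|<\frac15g(0)$ for all $x\in\mathbb{R}$; and suppose $\frac9{10}g(0)\le\tilde g\le g(0)$ on $\mathbb{R}$. Put $\hat g=\tilde g/g(0)$, $p(s,\tilde X)=\hat g(\tilde Xs)s^{2m}-s$, and let $\alpha\in C^\infty([0,\infty))$ be the function with $\frac{\partial p}{\partial s}(\alpha(\tilde X),\tilde X)=0$ and $(2m)^{-\frac1{2m-1}}\le\alpha(\tilde X)\le(\frac45\cdot2m)^{-\frac1{2m-1}}$ for all $\tilde X\ge0$. Define $a(\tilde X)=-p(\alpha(\tilde X),\tilde X)$. Then for all $\tilde X\ge0$, $$a(\tilde X)\ge a(0)=a:=(2m)^{-\frac1{2m-1}}-(2m)^{-\frac{2m}{2m-1}}.$$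
   Context: Existence (and uniqueness within the interval $[(2m)^{-1/(2m-1)},(\frac45 2m)^{-1/(2m-1)}]$, since $p$ is strictly convex in $s$ there) of such a smooth function $\alpha$ is part of the setting. *)

From Stdlib Require Import Reals Lra.
From Coquelicot Require Import Coquelicot.
Open Scope R_scope.

Definition smooth (f : R -> R) : Prop :=
  forall (n : nat) (x : R), ex_derive (Derive_n f n) x.

(* f is C^infinity on [0, oo): smooth on an open neighbourhood (-eps, oo)
   of the closed half-line. *)
Definition smooth_on_halfline (f : R -> R) : Prop :=
  exists eps : R, 0 < eps /\
    forall (n : nat) (x : R), -eps < x -> ex_derive (Derive_n f n) x.

(* For fixed X the map s |-> p(s, X) is convex on s > 0: its second derivative is
   s^(2m-2) [ (Xs)^2 ghat''(Xs) + 4m (Xs) ghat'(Xs) + 2m(2m-1) ghat(Xs) ], and the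
   bounds on ghat, ghat' and ghat'' keep the bracket above
   -1/5 - 4m/5 + 9/10 * 2m(2m-1) > 0.  Hence the critical point alpha(X) minimises
   p(., X).  At X = 0 the critical point equation 2m s^(2m-1) = 1 forces
   alpha(0) = L := (2m)^(-1/(2m-1)), and since L <= alpha(X) and ghat <= 1,
     p(alpha(X), X) <= p(L, X) <= L^(2m) - L = p(alpha(0), 0). *)

From Stdlib Require Import Reals Lra Lia.
From Coquelicot Require Import Coquelicot.
Open Scope R_scope.

Lemma mean_value_is_derive (f df : R -> R) (a b : R) :
  (forall x, Rmin a b <= x <= Rmax a b -> is_derive f x (df x)) ->
  exists c, Rmin a b <= c <= Rmax a b /\ f b - f a = df c * (b - a).
Proof.
  intro Hf; apply MVT_gen.
  - intros x Hx; apply Hf; lra.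
  - intros x Hx; apply continuity_pt_filterlim.
    apply (@ex_derive_continuous R_AbsRing R_NormedModule).
    exists (df x); exact (Hf x Hx).
Qed.

(* Two mean value steps: [f x - f c = f1 d (x - c) = f2 e (d - c) (x - c)]
   with [d] between [c] and [x], so both factors have the same sign. *)
Lemma critical_point_minimizes (f f1 f2 : R -> R) (lo c x : R) :
  (forall s, lo < s -> is_derive f s (f1 s)) ->
  (forall s, lo < s -> is_derive f1 s (f2 s)) ->
  (forall s, lo < s -> 0 <= f2 s) ->
  lo < c -> lo < x -> f1 c = 0 -> f c <= f x.
Proof.
  intros Hf Hf1 Hf2 Hc Hx Hcrit.
  destruct (mean_value_is_derive f f1 c x) as [d [Hd Hfd]].
  { intros s; unfold Rmin, Rmax; destruct (Rle_dec c x); intro; apply Hf; lra. }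
  assert (Hd_side : 0 <= (d - c) * (x - c)).
  { revert Hd; unfold Rmin, Rmax; destruct (Rle_dec c x); intro; nra. }
  destruct (mean_value_is_derive f1 f2 c d) as [e [He Hf1e]].
  { intros s; unfold Rmin, Rmax; destruct (Rle_dec c d); intro; apply Hf1;
      revert Hd; unfold Rmin, Rmax; destruct (Rle_dec c x); lra. }
  assert (Hf2e : 0 <= f2 e).
  { apply Hf2; revert He Hd; unfold Rmin, Rmax;
      destruct (Rle_dec c d), (Rle_dec c x); lra. }
  rewrite Hcrit in Hf1e.
  assert (Hfx : f x - f c = f2 e * ((d - c) * (x - c))) by nra.
  assert (0 <= f2 e * ((d - c) * (x - c))) by (apply Rmult_le_pos; assumption).
  lra.
Qed.

Lemma Rpower_pow_mult (x y : R) (k : nat) : Rpower x y ^ k = Rpower x (y * INR k).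
Proof. rewrite <- Rpower_pow by apply exp_pos; apply Rpower_mult. Qed.

Definition profile (h : R -> R) (n : nat) (X s : R) : R := h (X * s) * s ^ n - s.

Definition dprofile (h h1 : R -> R) (n : nat) (X s : R) : R :=
  X * h1 (X * s) * s ^ n + h (X * s) * (INR n * s ^ pred n) - 1.

Definition d2profile (h h1 h2 : R -> R) (n : nat) (X s : R) : R :=
  s ^ (n - 2) * ((X * s) ^ 2 * h2 (X * s) + 2 * INR n * (X * s * h1 (X * s))
                 + INR n * (INR n - 1) * h (X * s)).

Section NormalizedProfile.

Variables (h h1 h2 : R -> R) (n : nat).
Hypothesis n_ge2 : (2 <= n)%nat.
Hypothesis h_derive : forall x, is_derive h x (h1 x).
Hypothesis h1_derive : forall x, is_derive h1 x (h2 x).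
Hypothesis h_bounds : forall x, 9 / 10 <= h x <= 1.
Hypothesis h1_bound : forall x, - (1 / 5) < x * h1 x.
Hypothesis h2_bound : forall x, - (1 / 5) <= x ^ 2 * h2 x.

Lemma is_derive_profile (X s : R) : is_derive (profile h n X) s (dprofile h h1 n X s).
Proof.
  unfold profile, dprofile; auto_derive.
  - exists (h1 (X * s)); apply h_derive.
  - change (Derive (fun x => h x)) with (Derive h).
    rewrite (is_derive_unique _ _ _ (h_derive (X * s))); ring.
Qed.

Lemma is_derive_dprofile (X s : R) :
  is_derive (dprofile h h1 n X) s (d2profile h h1 h2 n X s).
Proof.
  unfold dprofile, d2profile.
  replace n with (S (S (n - 2))) by lia.
  set (k := (n - 2)%nat).
  auto_derive.
  - split; [exists (h2 (X * s)); apply h1_derive|].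
    split; [exists (h1 (X * s)); apply h_derive|exact I].
  - change (Derive (fun x => h x)) with (Derive h).
    change (Derive (fun x => h1 x)) with (Derive h1).
    rewrite (is_derive_unique _ _ _ (h_derive (X * s))).
    rewrite (is_derive_unique _ _ _ (h1_derive (X * s))).
    change (match k with 0%nat => 1 | S _ => INR k + 1 end) with (INR (S k)).
    replace (S (S k) - 2)%nat with k by lia.
    rewrite !S_INR; ring.
Qed.

Lemma d2profile_nonneg (X s : R) : 0 <= s -> 0 <= d2profile h h1 h2 n X s.
Proof.
  intro Hs; unfold d2profile; apply Rmult_le_pos; [now apply pow_le|].
  set (y := X * s).
  assert (Hn : 2 <= INR n) by (apply (le_INR 2); exact n_ge2).
  pose proof (h_bounds y); pose proof (h1_bound y); pose proof (h2_bound y).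
  assert (2 * INR n * (y * h1 y) >= 2 * INR n * (- (1 / 5))) by nra.
  assert (INR n * (INR n - 1) * h y >= INR n * (INR n - 1) * (9 / 10)).
  { apply Rle_ge, Rmult_le_compat_l; [nra | lra]. }
  assert (0 <= - (1 / 5) + 2 * INR n * (- (1 / 5)) + INR n * (INR n - 1) * (9 / 10)) by nra.
  lra.
Qed.

Lemma profile_at_critical_point_le (X c s : R) :
  0 < c -> 0 < s -> dprofile h h1 n X c = 0 -> profile h n X c <= s ^ n - s.
Proof.
  intros Hc Hs Hcrit.
  apply Rle_trans with (profile h n X s).
  - apply (critical_point_minimizes _ (dprofile h h1 n X) (d2profile h h1 h2 n X) 0);
      try assumption.
    + intros; apply is_derive_profile.
    + intros; apply is_derive_dprofile.
    + intros; apply d2profile_nonneg; lra.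
  - unfold profile; pose proof (h_bounds (X * s)); pose proof (pow_le s n (Rlt_le _ _ Hs)).
    nra.
Qed.

Lemma dprofile_root_at_0 (c : R) :
  h 0 = 1 -> 0 < c -> dprofile h h1 n 0 c = 0 -> c = Rpower (INR n) (- (1 / (INR n - 1))).
Proof.
  intros Hh0 Hc Hcrit.
  unfold dprofile in Hcrit; rewrite !Rmult_0_l, Hh0 in Hcrit.
  assert (Hn : 2 <= INR n) by (apply (le_INR 2); exact n_ge2).
  assert (Hpred : INR (pred n) = INR n - 1).
  { replace n with (S (pred n)) at 2 by lia; rewrite S_INR; ring. }
  assert (Hpow : c ^ pred n = / INR n).
  { apply (Rmult_eq_reg_l (INR n)); [|lra]. rewrite Rinv_r; lra. }
  assert (Hln : (INR n - 1) * ln c = - ln (INR n)).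
  { rewrite <- Hpred, <- ln_pow, Hpow, ln_Rinv by lra; reflexivity. }
  rewrite <- (exp_ln c Hc); unfold Rpower; f_equal.
  apply (Rmult_eq_reg_l (INR n - 1)); [|lra].
  rewrite Hln; field; lra.
Qed.

Lemma profile_critical_value_le_at_0 (alpha : R -> R) :
  h 0 = 1 ->
  (forall X, 0 <= X -> Derive (profile h n X) (alpha X) = 0 /\
                       Rpower (INR n) (- (1 / (INR n - 1))) <= alpha X) ->
  alpha 0 = Rpower (INR n) (- (1 / (INR n - 1))) /\
  forall X, 0 <= X -> profile h n X (alpha X) <= profile h n 0 (alpha 0).
Proof.
  intros Hh0 Halpha.
  set (L := Rpower (INR n) (- (1 / (INR n - 1)))) in *.
  assert (HL : 0 < L) by apply exp_pos.
  assert (Hderive : forall X, Derive (profile h n X) (alpha X) = dprofile h h1 n X (alpha X))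
    by (intro X; apply is_derive_unique, is_derive_profile).
  destruct (Halpha 0 (Rle_refl 0)) as [Hcrit0 HL0]; rewrite Hderive in Hcrit0.
  assert (Halpha0 : alpha 0 = L) by (apply dprofile_root_at_0; auto; lra).
  split; [exact Halpha0|].
  intros X HX; destruct (Halpha X HX) as [HcritX HLX]; rewrite Hderive in HcritX.
  rewrite Halpha0; unfold profile at 2; rewrite Rmult_0_l, Hh0, Rmult_1_l.
  apply profile_at_critical_point_le; auto; lra.
Qed.

End NormalizedProfile.

Lemma is_derive_div_const (f : R -> R) (c x : R) :
  ex_derive f x -> is_derive (fun y => f y / c) x (Derive f x / c).
Proof.
  intro Hf; auto_derive; [exact Hf|].
  change (Derive (fun y => f y)) with (Derive f); unfold Rdiv; ring.
Qed.

Section Normalization.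

Variables (f : R -> R) (c : R).
Hypothesis c_pos : 0 < c.

Lemma normalized_range :
  (forall x, 9 / 10 * c <= f x <= c) -> forall x, 9 / 10 <= f x / c <= 1.
Proof.
  intros Hf x; specialize (Hf x); split;
    [apply (Rle_div_r _ _ c) | apply Rle_div_l]; lra.
Qed.

Lemma normalized_first_order_bound :
  (forall x, 0 <= - x * Derive f x /\ - x * Derive f x < 1 / 5 * c) ->
  forall x, - (1 / 5) < x * (Derive f x / c).
Proof.
  intros Hf x; specialize (Hf x).
  replace (x * (Derive f x / c)) with (x * Derive f x / c) by (field; lra).
  apply Rlt_div_r; lra.
Qed.

Lemma normalized_second_order_bound :
  (forall x, Rabs (x ^ 2 * Derive_n f 2 x) < 1 / 5 * c) ->
  forall x, - (1 / 5) <= x ^ 2 * (Derive_n f 2 x / c).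
Proof.
  intros Hf x; specialize (Hf x); apply Rabs_def2 in Hf.
  replace (x ^ 2 * (Derive_n f 2 x / c)) with (x ^ 2 * Derive_n f 2 x / c)
    by (field; lra).
  apply Rle_div_r; lra.
Qed.

End Normalization.

Theorem lemma6p7 (m : nat) (g gt alpha : R -> R) (delta : R) :
  (2 <= m)%nat ->
  smooth g -> 0 < g 0 ->
  smooth gt ->
  0 < delta < 1 ->
  (forall x, Rabs x <= delta -> gt x = g x) ->
  (forall x, 1 <= Rabs x -> gt x = 9 / 10 * g 0) ->
  (forall x, 0 <= - x * Derive gt x /\ - x * Derive gt x < 1 / 5 * g 0) ->
  (forall x, Rabs (x ^ 2 * Derive_n gt 2 x) < 1 / 5 * g 0) ->
  (forall x, 9 / 10 * g 0 <= gt x <= g 0) ->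
  let ghat := fun x => gt x / g 0 in
  let p := fun s X => ghat (X * s) * s ^ (2 * m) - s in
  smooth_on_halfline alpha ->
  (forall X, 0 <= X ->
     Derive (fun s => p s X) (alpha X) = 0 /\
     Rpower (2 * INR m) (- (1 / (2 * INR m - 1))) <= alpha X /\
     alpha X <= Rpower (4 / 5 * (2 * INR m)) (- (1 / (2 * INR m - 1)))) ->
  let a := fun X => - p (alpha X) X in
  a 0 = Rpower (2 * INR m) (- (1 / (2 * INR m - 1)))
        - Rpower (2 * INR m) (- (2 * INR m / (2 * INR m - 1))) /\
  (forall X, 0 <= X -> a X >= a 0).
Proof.
  (* Smoothness of g and alpha, the value of gt for |x| >= 1 and the upper bound
     on alpha are not needed. *)
  intros Hm _ Hg0 Hgt Hdelta_pos Hdelta _ Hgt1 Hgt2 Hgt_bounds ghat p _ Halpha a.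
  set (n := (2 * m)%nat).
  set (h1 := fun x => Derive gt x / g 0).
  set (h2 := fun x => Derive_n gt 2 x / g 0).
  assert (HmR : 2 <= INR m) by exact (le_INR 2 m Hm).
  assert (HnR : INR n = 2 * INR m) by (unfold n; rewrite mult_INR; reflexivity).
  assert (ghat_derive : forall x, is_derive ghat x (h1 x))
    by (intro x; exact (is_derive_div_const gt (g 0) x (Hgt 0%nat x))).
  assert (ghat0 : ghat 0 = 1).
  { unfold ghat; rewrite Hdelta by (rewrite Rabs_R0; lra); field; lra. }
  assert (Hcrit : forall X, 0 <= X -> Derive (profile ghat n X) (alpha X) = 0 /\
                    Rpower (INR n) (- (1 / (INR n - 1))) <= alpha X).
  { intros X HX; rewrite HnR; split; apply (Halpha X HX). }
  destruct (profile_critical_value_le_at_0 ghat h1 h2 n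
              ltac:(lia) ghat_derive
              (fun x => is_derive_div_const (Derive gt) (g 0) x (Hgt 1%nat x))
              (normalized_range gt (g 0) Hg0 Hgt_bounds)
              (normalized_first_order_bound gt (g 0) Hg0 Hgt1)
              (normalized_second_order_bound gt (g 0) Hg0 Hgt2)
              alpha ghat0 Hcrit) as [Halpha0 Hmin].
  split.
  - unfold a, p; rewrite Halpha0, Rmult_0_l, ghat0, Rmult_1_l, HnR.
    rewrite Rpower_pow_mult, mult_INR.
    replace (- (1 / (2 * INR m - 1)) * (INR 2 * INR m))
      with (- (2 * INR m / (2 * INR m - 1))) by (simpl; field; lra).
    ring.
  - intros X HX; specialize (Hmin X HX); unfold a.
    change p with (fun s X => profile ghat n X s); cbv beta; lra.
Qed.
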